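(* Let $L$ be an $n\times n$ nonsingular M-matrix with integer entries and nonnegative row sums. Then every equivalence class of $\mathbb{Z}^n$ under $\sim$ contains a unique energy minimizer, a unique $z$-superstable configuration and a unique $\chi$-superstable configuration, and these three configurations coincide.
   Context: A Z-matrix is a square real matrix whose off-diagonal entries are all $\le 0$. A nonsingular M-matrix is a Z-matrix $L$ that is invertible with $L^{-1}$ having all entries nonnegative. Vector inequalities are entrywise. For $f,g\in\mathbb{Z}^n$, $f\sim g$ means $g-f=Lz$ for some $z\in\mathbb{Z}^n$. For $q\in\mathbb{Z}^n$, $E(q)=\|L^{-1}q\|_2^2$; an energy minimizer in the class of $f$ is a $g\in\mathbb{Z}^n$, $g\ge0$, $g\sim f$, minimizing $E$ among all such vectors. A vector $f\in\mathbb{Z}^n$ with $f\ge0$ is $\chi$-superstable if for every $\chi\in\{0,1\}^n$, $\chi\ne0$, there is $i$ with $f_i-(L\chi)_i<0$; it is $z$-superstable if for every $z\in\mathbb{Z}^n$, $z\ge0$, $z\ne0$, there is $i$ with $f_i-(Lz)_i<0$. *)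

From HB Require Import structures.
From mathcomp Require Import all_boot all_order all_algebra.
Set Implicit Arguments. Unset Strict Implicit. Unset Printing Implicit Defensive.
Import Order.TTheory GRing.Theory Num.Theory.
Local Open Scope ring_scope.

(* The integer matrix L viewed over the rationals (to speak of L^{-1}). *)
Definition Lrat (n : nat) (L : 'M[int]_n) : 'M[rat]_n :=
  map_mx (fun x : int => x%:~R) L.

Definition Z_matrix (n : nat) (L : 'M[int]_n) : Prop :=
  forall i j : 'I_n, i != j -> L i j <= 0.

Definition nonsingular_M_matrix (n : nat) (L : 'M[int]_n) : Prop :=
  [/\ Z_matrix L, Lrat L \in unitmx & forall i j : 'I_n, 0 <= invmx (Lrat L) i j].

Definition nonneg_row_sums (n : nat) (L : 'M[int]_n) : Prop :=
  forall i : 'I_n, 0 <= \sum_(j < n) L i j.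

Definition vnonneg (n : nat) (v : 'cV[int]_n) : Prop :=
  forall i : 'I_n, 0 <= v i 0.

Definition lequiv (n : nat) (L : 'M[int]_n) (f g : 'cV[int]_n) : Prop :=
  exists z : 'cV[int]_n, g - f = L *m z.

Definition energy (n : nat) (L : 'M[int]_n) (q : 'cV[int]_n) : rat :=
  \sum_(i < n) ((invmx (Lrat L) *m map_mx (fun x : int => x%:~R) q) i 0) ^+ 2.

Definition energy_minimizer (n : nat) (L : 'M[int]_n) (f g : 'cV[int]_n) : Prop :=
  [/\ vnonneg g, lequiv L f g &
      forall h : 'cV[int]_n, vnonneg h -> lequiv L f h -> energy L g <= energy L h].

Definition chi_superstable (n : nat) (L : 'M[int]_n) (f : 'cV[int]_n) : Prop :=
  vnonneg f /\
  forall chi : 'cV[int]_n, (forall i, chi i 0 = 0 \/ chi i 0 = 1) -> chi != 0 ->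
    exists i : 'I_n, f i 0 - (L *m chi) i 0 < 0.

Definition z_superstable (n : nat) (L : 'M[int]_n) (f : 'cV[int]_n) : Prop :=
  vnonneg f /\
  forall z : 'cV[int]_n, vnonneg z -> z != 0 ->
    exists i : 'I_n, f i 0 - (L *m z) i 0 < 0.

From HB Require Import structures.
From mathcomp Require Import all_boot all_order all_algebra.
From mathcomp Require Import zify lra.
From Stdlib Require Import Classical.
Set Implicit Arguments. Unset Strict Implicit. Unset Printing Implicit Defensive.
Import Order.TTheory GRing.Theory Num.Theory.
Local Open Scope ring_scope.

(* If g is z-superstable and h = g + L w >= 0, then w >= 0: otherwise firing the
   negative part of w is legal from g.  Hence z-superstable representatives are
   unique, and since L^{-1} h = L^{-1} g + w with L^{-1} g >= 0, such a g has
   strictly smaller energy than every other nonnegative h ~ g.  One exists: from a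
   nonnegative representative g0, keep firing legal vectors z >= 0; the total
   amount fired grows, yet stays below the sum of the entries of L^{-1} g0.
   Finally chi- and z-superstability agree: firing the indicator of the set where
   z >= 0 is maximal takes away no more than firing z, by a maximum principle for
   Z-matrices with nonnegative row sums. *)

Local Notation ratv v := (map_mx (fun x : int => x%:~R) v).

Lemma bounded_ascent (T : Type) (P : T -> Prop) (mu : T -> int) (N : int) (Q : Prop) :
  (forall x, P x -> mu x <= N) ->
  (forall x, P x -> Q \/ exists2 y, P y & mu x < mu y) ->
  forall x, P x -> Q.
Proof.
move=> bounded ascend x Px.
suff ascent_from : forall d : nat, forall x, P x -> N - mu x <= d%:Z -> Q.
  by apply: (ascent_from `|N - mu x|%N x Px); lia.
elim=> [|d IHd] {}x {}Px hd; case: (ascend x Px) => // -[y Py lt_xy].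
- by have := bounded y Py; lia.
- by apply: (IHd y Py); lia.
Qed.

Lemma lequiv_sym n (L : 'M[int]_n) f g : lequiv L f g -> lequiv L g f.
Proof. by move=> [z hz]; exists (- z); rewrite mulmxN -hz opprB. Qed.

Lemma lequiv_trans n (L : 'M[int]_n) f g h :
  lequiv L f g -> lequiv L g h -> lequiv L f h.
Proof.
move=> [z1 h1] [z2 h2]; exists (z1 + z2).
by rewrite mulmxDr -h1 -h2 [RHS]addrC addrA subrK.
Qed.

Lemma lequivE n (L : 'M[int]_n) f g : lequiv L f g <-> exists w, g = f + L *m w.
Proof.
split=> -[w hw]; exists w; first by rewrite -hw addrC subrK.
by rewrite hw addrC addKr.
Qed.

Lemma z_superstable_chi_superstable n (L : 'M[int]_n) f :
  z_superstable L f -> chi_superstable L f.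
Proof.
move=> [f_ge0 stable]; split => // chi chi01 chi_neq0; apply: stable chi_neq0 => i.
by case: (chi01 i) => ->.
Qed.

Lemma not_z_superstable n (L : 'M[int]_n) g : vnonneg g -> ~ z_superstable L g ->
  exists z, [/\ vnonneg z, z != 0 & vnonneg (g - L *m z)].
Proof.
move=> g_ge0 unstable; apply: NNPP => none; apply: unstable; split => // z z_ge0 z_neq0.
apply: NNPP => no_neg; apply: none; exists z; split => // i.
rewrite leNgt; apply/negP => lt_i0; apply: no_neg.
by exists i; rewrite !mxE in lt_i0 *.
Qed.

Section ZMatrix.
Variables (n : nat) (L : 'M[int]_n).
Hypothesis hZ : Z_matrix L.

Lemma Zmatrix_mulmx_le0 (v : 'cV[int]_n) i :
  vnonneg v -> v i 0 = 0 -> (L *m v) i 0 <= 0.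
Proof.
move=> v_ge0 vi0; rewrite mxE; apply: sumr_le0 => j _.
case: (eqVneq i j) => [<-|neq_ij]; first by rewrite vi0 mulr0.
exact: mulr_le0_ge0 (hZ neq_ij) (v_ge0 j).
Qed.

Lemma Zmatrix_max_principle (y : 'cV[int]_n) i :
  0 <= \sum_j L i j -> 0 <= y i 0 -> (forall j, y j 0 <= y i 0) ->
  0 <= (L *m y) i 0.
Proof.
move=> row_ge0 yi_ge0 yi_max; rewrite mxE.
apply: le_trans (_ : 0 <= \sum_j L i j * y i 0) _.
  by rewrite -mulr_suml mulr_ge0.
apply: ler_sum => j _; case: (eqVneq i j) => [<-//|neq_ij].
exact: (ler_wnM2l (hZ neq_ij) (yi_max j)).
Qed.

Lemma z_superstable_shift_nonneg g w :
  z_superstable L g -> vnonneg (g + L *m w) -> vnonneg w.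
Proof.
move=> [g_ge0 stable] h_ge0 i0; rewrite leNgt; apply/negP => wi0_lt0.
pose wp : 'cV[int]_n := \col_i (if w i 0 < 0 then 0 else w i 0).
pose wm : 'cV[int]_n := \col_i (if w i 0 < 0 then - w i 0 else 0).
have wp_ge0 : vnonneg wp by move=> i; rewrite mxE; case: ltP.
have wm_ge0 : vnonneg wm by move=> i; rewrite mxE; case: ltP => // /ltW; rewrite oppr_ge0.
have w_split : w = wp - wm.
  by apply/matrixP => i j; rewrite ord1 !mxE; case: ifP; rewrite ?subr0 ?sub0r ?opprK.
have wm_neq0 : wm != 0.
  by apply/cV0Pn; exists i0; rewrite mxE wi0_lt0 oppr_eq0 lt_eqF.
have [i] := stable wm wm_ge0 wm_neq0; apply/negP; rewrite -leNgt subr_ge0.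
have := h_ge0 i; rewrite w_split mulmxBr !mxE.
case: (ltP (w i 0) 0) => [wi_lt0|wi_ge0] hi.
- have wpi0 : wp i 0 = 0 by rewrite mxE wi_lt0.
  by have := Zmatrix_mulmx_le0 wp_ge0 wpi0; rewrite mxE; lra.
- have wmi0 : wm i 0 = 0 by rewrite mxE ltNge wi_ge0.
  by have := Zmatrix_mulmx_le0 wm_ge0 wmi0; rewrite mxE; have := g_ge0 i; lra.
Qed.

Lemma z_superstable_unique g h :
  z_superstable L g -> z_superstable L h -> lequiv L g h -> h = g.
Proof.
move=> g_ss h_ss /lequivE[w def_h].
have w_ge0 : vnonneg w.
  by apply: (z_superstable_shift_nonneg g_ss); rewrite -def_h; case: h_ss.
have Nw_ge0 : vnonneg (- w).
  by apply: (z_superstable_shift_nonneg h_ss); rewrite def_h mulmxN addrK; case: g_ss.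
suff w0 : w = 0 by rewrite def_h w0 mulmx0 addr0.
apply/matrixP => i j; rewrite ord1 mxE.
by have := Nw_ge0 i; have := w_ge0 i; rewrite mxE; lra.
Qed.

Lemma chi_superstable_z_superstable f :
  nonneg_row_sums L -> chi_superstable L f -> z_superstable L f.
Proof.
move=> hrow [f_ge0 stable]; split => // z z_ge0 /cV0Pn[j0 zj0_neq0].
have [im _ z_max] := @arg_maxP _ _ _ j0 predT (fun i => z i 0) isT.
pose m : int := z im 0; have {}z_max j : z j 0 <= m by apply: z_max.
pose chi : 'cV[int]_n := \col_i (z i 0 == m)%:R.
have chiE i : chi i 0 = (z i 0 == m)%:R by rewrite mxE.
have chi01 i : chi i 0 = 0 \/ chi i 0 = 1 by rewrite chiE; case: eqP; [right|left].
have chi_neq0 : chi != 0 by apply/cV0Pn; exists im; rewrite chiE eqxx oner_eq0.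
have [i lt_i] := stable chi chi01 chi_neq0; exists i.
(* If z is maximal at i, so is z - chi, whose entries are at most m - 1. *)
case: (eqVneq (z i 0) m) => [zi_max|zi_lt].
- suff : 0 <= (L *m (z - chi)) i 0.
    have -> : (L *m (z - chi)) i 0 = (L *m z) i 0 - (L *m chi) i 0.
      by rewrite mulmxBr !mxE.
    by rewrite subr_ge0 => le_chi_z; apply: le_lt_trans lt_i; rewrite lerD2l lerN2.
  have m_ge1 : 1 <= m.
    have zj0_gt0 : 0 < z j0 0 by rewrite lt_def zj0_neq0 z_ge0.
    by have := z_max j0; lia.
  apply: Zmatrix_max_principle (hrow i) _ _ => [|j]; rewrite !mxE zi_max eqxx /=.
    by rewrite subr_ge0.
  by have := z_max j; case: eqP => [->|/eqP]; rewrite /= ?subr0; lia.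
- have chi_i0 : chi i 0 = 0 by rewrite chiE (negPf zi_lt).
  have chi_ge0 : vnonneg chi by move=> k; case: (chi01 k) => ->.
  have := Zmatrix_mulmx_le0 chi_ge0 chi_i0; have := f_ge0 i; lra.
Qed.

End ZMatrix.

Section MMatrix.
Variables (n : nat) (L : 'M[int]_n).
Hypothesis hM : nonsingular_M_matrix L.
Local Notation B := (invmx (Lrat L)).

Let hZ : Z_matrix L. Proof. by case: hM. Qed.

Lemma invmx_mulmx_shift (g w : 'cV[int]_n) :
  B *m ratv (g + L *m w) = B *m ratv g + ratv w.
Proof.
case: hM => _ L_unit _.
by rewrite map_mxD mulmxDr map_mxM mulmxA mulVmx // mul1mx.
Qed.

Lemma invmx_mulmx_nonneg (v : 'cV[int]_n) i : vnonneg v -> 0 <= (B *m ratv v) i 0.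
Proof.
case: hM => _ _ B_ge0 v_ge0; rewrite mxE; apply: sumr_ge0 => j _.
by rewrite mxE mulr_ge0 ?ler0z.
Qed.

Lemma energy_lt_z_superstable g h :
  z_superstable L g -> vnonneg h -> lequiv L g h -> h != g -> energy L g < energy L h.
Proof.
move=> g_ss h_ge0 /lequivE[w def_h] h_neq_g.
have w_ge0 : vnonneg w by apply: (z_superstable_shift_nonneg hZ g_ss); rewrite -def_h.
have /cV0Pn[i wi_neq0] : w != 0.
  by apply: contraNneq h_neq_g => w0; rewrite def_h w0 mulmx0 addr0.
rewrite /energy def_h invmx_mulmx_shift (bigD1 i) // [X in _ < X](bigD1 i) //=.
have x_ge0 k := invmx_mulmx_nonneg k g_ss.1.
apply: ltr_leD; last apply: ler_sum => k _.
  have wi_gt0 : 0 < (w i 0)%:~R :> rat by rewrite ltr0z lt_def wi_neq0 w_ge0.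
  by rewrite [X in _ < X ^+ 2]mxE [ratv w i 0]mxE; have := x_ge0 i; nra.
have wk_ge0 : 0 <= (w k 0)%:~R :> rat by rewrite ler0z.
by rewrite [X in _ <= X ^+ 2]mxE [ratv w k 0]mxE; have := x_ge0 k; nra.
Qed.

Lemma sum_le_invmx_sum (g w : 'cV[int]_n) :
  vnonneg (g - L *m w) -> (\sum_i w i 0)%:~R <= \sum_i (B *m ratv g) i 0.
Proof.
rewrite -mulmxN => /invmx_mulmx_nonneg Bshift_ge0.
rewrite rmorph_sum; apply: ler_sum => i _.
have := Bshift_ge0 i; rewrite invmx_mulmx_shift map_mxN mxE.
by rewrite [X in _ + X]mxE [X in _ - X]mxE subr_ge0.
Qed.

Lemma exists_nonneg_lequiv f : exists g, lequiv L f g /\ vnonneg g.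
Proof.
have detL_neq0 : \det L != 0.
  by case: hM => _; rewrite unitmxE det_map_mx unitfE intr_eq0.
(* L v is the constant vector |det L|, so a large multiple of v lifts f above 0. *)
pose v : 'cV[int]_n := Num.sg (\det L) *: (\adj L *m const_mx 1).
have Lv : L *m v = `|\det L| *: const_mx 1.
  by rewrite -scalemxAr mulmxA mul_mx_adj mul_scalar_mx scalerA -normrEsg.
pose c := \sum_i `|f i 0|.
exists (f + L *m (c *: v)); split; first by apply/lequivE; exists (c *: v).
move=> i; rewrite -scalemxAr Lv scalerA !mxE mulr1.
have fi_le_c : `|f i 0| <= c.
  by rewrite /c (bigD1 i) //= lerDl sumr_ge0.
have det_ge1 : 1 <= `|\det L| by rewrite -abszE lez_nat absz_gt0.
by have := lerNnormlW fi_le_c; have := le_trans (normr_ge0 _) fi_le_c; nra.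
Qed.

Lemma exists_z_superstable_lequiv f : exists g, lequiv L f g /\ z_superstable L g.
Proof.
have [g0 [f_g0 g0_ge0]] := exists_nonneg_lequiv f.
pose P w := vnonneg (g0 - L *m w).
pose N := Num.floor (\sum_i (B *m ratv g0) i 0).
apply: (@bounded_ascent _ P (fun w => \sum_i w i 0) N _ _ _ 0).
- by move=> w /sum_le_invmx_sum; rewrite floor_ge_int.
- move=> w Pw; case: (classic (z_superstable L (g0 - L *m w))) => [ss|unstable].
    left; exists (g0 - L *m w); split => //.
    by apply: lequiv_trans f_g0 _; apply/lequivE; exists (- w); rewrite mulmxN.
  right; have [z [z_ge0 z_neq0 Pwz]] := not_z_superstable Pw unstable.
  exists (w + z); first by rewrite /P mulmxDr opprD addrA.
  have [i zi_neq0] := cV0Pn _ z_neq0.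
  under [X in _ < X]eq_bigr do rewrite mxE.
  rewrite big_split /= ltrDl (bigD1 i) //=.
  by rewrite ltr_wpDr ?sumr_ge0 // lt_def zi_neq0 z_ge0.
- by rewrite /P mulmx0 subr0.
Qed.

End MMatrix.

Theorem mainTheorem7 (n : nat) (L : 'M[int]_n)
  (hM : nonsingular_M_matrix L) (hrow : nonneg_row_sums L) (f : 'cV[int]_n) :
  exists g : 'cV[int]_n,
    (forall h : 'cV[int]_n, energy_minimizer L f h <-> h = g) /\
    (forall h : 'cV[int]_n, (lequiv L f h /\ z_superstable L h) <-> h = g) /\
    (forall h : 'cV[int]_n, (lequiv L f h /\ chi_superstable L h) <-> h = g).
Proof.
have hZ : Z_matrix L by case: hM.
have [g [f_g g_ss]] := exists_z_superstable_lequiv hM f.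
have g_h h : lequiv L f h -> lequiv L g h := lequiv_trans (lequiv_sym f_g).
have z_unique h : lequiv L f h /\ z_superstable L h <-> h = g.
  split=> [[/g_h g_h' h_ss]|->]; last by split.
  exact: (z_superstable_unique hZ g_ss h_ss g_h').
exists g; split; last split => // h.
- move=> h; split=> [[h_ge0 f_h h_min]|->].
    apply/eqP; apply: contraTT (h_min g g_ss.1 f_g) => h_neq_g.
    by rewrite -ltNge (energy_lt_z_superstable hM g_ss h_ge0 (g_h _ f_h)).
  split=> // [|k k_ge0 f_k]; first exact: g_ss.1.
  have [->//|k_neq_g] := eqVneq k g.
  exact/ltW/(energy_lt_z_superstable hM g_ss k_ge0 (g_h _ f_k)).
- rewrite -z_unique; split=> -[f_h h_ss]; split=> //.
    exact: (chi_superstable_z_superstable hZ hrow h_ss).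
  exact: z_superstable_chi_superstable.
Qed.
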